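(* Fix an integer $n\ge 1$ and $p\in(0,1]$. Let \[ \textsc{Pol}=\Big\{(\mathbf x,\mathbf y)\ge 0:\ x_{1,1}+y_{1,1}=1,\ \ x_{t,s}+y_{t,s}=\tfrac1t\sum_{\sigma=1}^{t-1}\big(y_{t-1,\sigma}+(1-p)x_{t-1,\sigma}\big)\ \ \forall\, t\in\{2,\dots,n\},\ s\in[t]\Big\}, \] where $\mathbf x=(x_{t,s})_{t\in[n],s\in[t]}$ and $\mathbf y=(y_{t,s})_{t\in[n],s\in[t]}$. (i) For every (possibly randomized) policy $\mathcal P$ for the SP-UA, the vector defined by $x_{t,s}=\Pr(\mathcal P \text{ reaches state }(t,s)\text{ and makes an offer})$ and $y_{t,s}=\Pr(\mathcal P\text{ reaches state }(t,s)\text{ and passes})$ belongs to $\textsc{Pol}$. (ii) Conversely, for every $(\mathbf x,\mathbf y)\in\textsc{Pol}$, the randomized policy $\mathcal P$ that in state $(1,1)$ makes an offer with probability $x_{1,1}$, and for $t>1$ in state $(t,s)$ makes an offer with probability \[ \frac{t\,x_{t,s}}{\sum_{\sigma=1}^{t-1}\big(y_{t-1,\sigma}+(1-p)x_{t-1,\sigma}\big)} \] (when the denominator is $0$, the state is reached with probability $0$ and the action there is arbitrary), satisfies $x_{t,s}=\Pr(\mathcal P\text{ reaches }(t,s)\text{ and makes an offer})$ and $y_{t,s}=\Pr(\mathcal P\text{ reaches }(t,s)\text{ and passes})$ for all $t\in[n]$, $s\in[t]$.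
   Context: Secretary problem with uncertain acceptance (SP-UA): fix an integer $n\ge1$ and $p\in(0,1]$. There are $n$ candidates with distinct overall ranks $1,\dots,n$ (rank $1$ is best). They arrive one at a time in an order given by a uniformly random permutation; $R_t\in[n]$ denotes the overall rank of the $t$-th arriving candidate and $r_t\in[t]$ its partial rank, i.e., its rank among the first $t$ arrivals. At each time $t$, the decision maker, having observed $r_1,\dots,r_t$, either makes an offer to the $t$-th candidate or passes, irrevocably; policies may randomize. An offered candidate accepts independently with probability $p$, in which case the process stops; otherwise the process moves to the next candidate. The process ends when an offer is accepted or after candidate $n$. The policy is in state $(t,s)$ when it is examining the $t$-th candidate and $r_t=s$; ''reaching state $(t,s)$'' means the process has not stopped before time $t$ and $r_t=s$. *)

From mathcomp Require Import all_boot all_order all_algebra all_fingroup.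
Set Implicit Arguments. Unset Strict Implicit. Unset Printing Implicit Defensive.
Import Order.TTheory GRing.Theory Num.Theory.
Local Open Scope ring_scope.

(* Arrival order: sigma : 'S_n, the candidate arriving at (0-based) position i
   has overall rank (sigma i).+1 (rank 1 = best). *)

Definition prank (n : nat) (sigma : 'S_n) (i : 'I_n) : nat :=
  (#|[set j : 'I_n | (j < i)%N && (sigma j < sigma i)%N]|).+1.

Definition pranks (n : nat) (sigma : 'S_n) : seq nat :=
  [seq prank sigma i | i <- enum 'I_n].

(* A (behavioral) randomized policy: P t rs as is the probability of making an
   offer at time t (1-based), having observed partial ranks rs = [r_1;...;r_t]
   and having taken past actions as = [a_1;...;a_(t-1)] (true = offer). *)
Definition policy (R : realFieldType) := nat -> seq nat -> seq bool -> R.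

Definition valid_policy (R : realFieldType) (P : policy R) : Prop :=
  forall t rs acts, 0 <= P t rs acts <= 1.

(* probability that, along the first t-1 steps with ranks rs and past actions
   acts (a tuple of length t-1), the policy takes exactly the actions acts and
   no offer is accepted *)
Definition path_weight (R : realFieldType) (p : R) (P : policy R)
    (t : nat) (rs : seq nat) (acts : (t.-1).-tuple bool) : R :=
  \prod_(k < t.-1)
     (let qk := P k.+1 (take k.+1 rs) (take k acts) in
      if nth false acts k then qk * (1 - p) else 1 - qk).

(* Pr(policy reaches state (t,s) and takes action b) (b = true: offer,
   b = false: pass), under a uniformly random arrival permutation. *)
Definition reach_prob (R : realFieldType) (n : nat) (p : R) (P : policy R)
    (t s : nat) (b : bool) : R :=
  (#|{perm 'I_n}|%:R)^-1 *
  \sum_(sigma : 'S_n) \sum_(acts : (t.-1).-tuple bool)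
     (if nth 0%N (pranks sigma) t.-1 == s then
        path_weight p P (take t (pranks sigma)) acts *
        (let q := P t (take t (pranks sigma)) acts in if b then q else 1 - q)
      else 0).

(* x, y are indexed 1-based: x t s for t in [n], s in [t]. *)
Definition lp_rhs (R : realFieldType) (p : R) (x y : nat -> nat -> R) (t : nat) : R :=
  \sum_(1 <= sg < t) (y t.-1 sg + (1 - p) * x t.-1 sg).

Definition inPol (R : realFieldType) (n : nat) (p : R) (x y : nat -> nat -> R) : Prop :=
  [/\ (forall t s, (1 <= t <= n)%N -> (1 <= s <= t)%N -> 0 <= x t s /\ 0 <= y t s),
      x 1%N 1%N + y 1%N 1%N = 1 &
      (forall t s, (2 <= t <= n)%N -> (1 <= s <= t)%N ->
         x t s + y t s = (t%:R)^-1 * lp_rhs p x y t)].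

Definition induced_policy (R : realFieldType) (n : nat) (p : R)
    (x y : nat -> nat -> R) (P : policy R) : Prop :=
  forall t rs acts, (1 <= t <= n)%N -> size rs = t -> size acts = t.-1 ->
    (t = 1%N -> P t rs acts = x 1%N 1%N) /\
    ((1 < t)%N -> lp_rhs p x y t != 0 ->
       P t rs acts = t%:R * x t (last 0%N rs) / lp_rhs p x y t).

From mathcomp Require Import all_boot all_order all_algebra all_fingroup.
From mathcomp Require Import zify ring lra.
Set Implicit Arguments. Unset Strict Implicit. Unset Printing Implicit Defensive.
Import Order.TTheory GRing.Theory Num.Theory.

(* The partial rank r_t of the t-th arrival is uniform on [t] and independent
   of r_1, ..., r_(t-1).  Let b be the earlier arrival whose overall rank is
   adjacent, among the first t arrivals, to that of the t-th one: exchanging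
   the two overall ranks moves r_t by one and does not change the relative
   order of the first t - 1 arrivals.  This yields an involution of the
   permutations matching r_t = s with r_t = s + 1 and preserving r_1, ...,
   r_(t-1).  A policy decides up to time t - 1 from r_1, ..., r_(t-1) only, so
   reaching state (t, s) has probability 1/t times the probability of reaching
   time t, and the latter is sum_sigma (y_(t-1,sigma) + (1 - p) x_(t-1,sigma)):
   this is (i).  For (ii), the induced policy offers in state (t, s) with the
   fraction x_(t,s) / (x_(t,s) + y_(t,s)), so by (i) and induction on t its
   reach probabilities satisfy the same recursion as (x, y); when the
   right-hand side vanishes, nonnegativity forces both to be zero. *)

Definition depends_on_first_pranks (T : Type) (n k : nat) (F : 'S_n -> T) :=
  forall x y : 'S_n, (forall i : 'I_n, (i < k)%N -> prank x i = prank y i) -> F x = F y.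

Definition strictly_between (u v w : nat) := (u < v < w) || (w < v < u).

Lemma perm_nat_neq n (x : 'S_n) i j : i != j -> (x i : nat) != x j.
Proof. by move=> ij; rewrite val_eqE (inj_eq (@perm_inj _ x)). Qed.

Lemma ltn_ord_neq n (i j : 'I_n) : (i < j)%N -> i != j.
Proof. by move=> ij; apply: contraTneq ij => ->; rewrite ltnn. Qed.

Lemma card_ord_ltn n k : (k <= n)%N -> #|[set j : 'I_n | (j < k)%N]| = k.
Proof.
move=> kn.
have -> : [set j : 'I_n | (j < k)%N] = widen_ord kn @: [set: 'I_k].
  apply/setP => j; rewrite inE; apply/idP/imsetP => [jk|[i _ ->]]; last by rewrite /= ltn_ord.
  by exists (Ordinal jk) => //; apply: val_inj.
by rewrite card_imset ?cardsT ?card_ord // => i j [] /val_inj.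
Qed.

Lemma prank_le n (x : 'S_n) (i : 'I_n) : (prank x i <= i.+1)%N.
Proof.
rewrite /prank ltnS -{2}(@card_ord_ltn n i (ltnW (ltn_ord i))).
by apply: subset_leq_card; apply/subsetP => j; rewrite !inE => /andP[].
Qed.

Section NearestSwap.
Variables (n : nat) (a : 'I_n).
Implicit Types (x : 'S_n) (b i j : 'I_n).

Definition swap_with b x : 'S_n := (tperm a b * x)%g.

Lemma swap_with_other b x j : j != a -> j != b -> swap_with b x j = x j.
Proof. by move=> ja jb; rewrite permM tpermD // eq_sym. Qed.

Lemma swap_with_at b x : swap_with b x a = x b.
Proof. by rewrite permM tpermL. Qed.

Lemma swap_with_partner b x : swap_with b x b = x a.
Proof. by rewrite permM tpermR. Qed.

Lemma swap_withK b : involutive (swap_with b).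
Proof. by move=> x; rewrite /swap_with mulgA tperm2 mul1g. Qed.

Definition nearest x b :=
  (b < a)%N &&
  [forall j : 'I_n, ((j < a)%N && (j != b)) ==> ~~ strictly_between (x a) (x j) (x b)].

Lemma nearest_between x b j :
  nearest x b -> (j < a)%N -> j != b -> ~~ strictly_between (x a) (x j) (x b).
Proof. by case/andP=> _ /forallP/(_ j) /implyP H ja jb; apply: H; rewrite ja. Qed.

Lemma swap_nearest_ltn x b i j : nearest x b -> (i < a)%N -> (j < a)%N ->
  (swap_with b x i < swap_with b x j)%N = (x i < x j)%N.
Proof.
move=> xb ia ja; have ba : (b < a)%N by case/andP: xb.
have := perm_nat_neq x (ltn_ord_neq ba); rewrite eq_sym => ab.
have [->|ib] := eqVneq i b; have [->|jb] := eqVneq j b; rewrite ?ltnn //.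
- rewrite swap_with_partner (swap_with_other _ (ltn_ord_neq ja) jb).
  have := nearest_between xb ja jb; have := perm_nat_neq x (ltn_ord_neq ja).
  have := perm_nat_neq x jb; rewrite /strictly_between; lia.
- rewrite swap_with_partner (swap_with_other _ (ltn_ord_neq ia) ib).
  have := nearest_between xb ia ib; have := perm_nat_neq x (ltn_ord_neq ia).
  have := perm_nat_neq x ib; rewrite /strictly_between; lia.
by rewrite !swap_with_other // ltn_ord_neq.
Qed.

Lemma prank_swap_nearest_before x b i : nearest x b -> (i < a)%N ->
  prank (swap_with b x) i = prank x i.
Proof.
move=> xb ia; congr S; apply: eq_card => j; rewrite !inE.
by case: ltnP => //= ji; apply: swap_nearest_ltn => //; exact: ltn_trans ji ia.
Qed.

Lemma nearest_swap x b : nearest x b -> nearest (swap_with b x) b.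
Proof.
move=> xb; have ba : (b < a)%N by case/andP: xb.
apply/andP; split => //; apply/forallP => j; apply/implyP => /andP[ja jb].
rewrite swap_with_at swap_with_partner (swap_with_other _ (ltn_ord_neq ja) jb).
by have := nearest_between xb ja jb; rewrite /strictly_between; lia.
Qed.

Lemma prank_swap_nearest x b : nearest x b -> (x a < x b)%N ->
  prank (swap_with b x) a = (prank x a).+1.
Proof.
move=> xb ab; have ba : (b < a)%N by case/andP: xb.
rewrite /prank swap_with_at; congr S.
have -> : [set j : 'I_n | (j < a)%N && (swap_with b x j < x b)%N] =
          b |: [set j : 'I_n | (j < a)%N && (x j < x a)%N].
  apply/setP => j; rewrite !inE.
  have [->|jb] := eqVneq j b; first by rewrite ba swap_with_partner ab.
  case ja: (j < a)%N => //=; rewrite (swap_with_other _ (ltn_ord_neq ja) jb).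
  have := nearest_between xb ja jb; have := perm_nat_neq x (ltn_ord_neq ja).
  have := perm_nat_neq x jb; rewrite /strictly_between; lia.
by rewrite cardsU1 inE ba ltnNge ltnW.
Qed.

Lemma nearest_uniq x b1 b2 : nearest x b1 -> nearest x b2 ->
  (x a < x b1)%N = (x a < x b2)%N -> b1 = b2.
Proof.
move=> xb1 xb2 e; apply/eqP/negPn/negP => b12.
have b1a : (b1 < a)%N by case/andP: xb1.
have b2a : (b2 < a)%N by case/andP: xb2.
have b21 : b2 != b1 by rewrite eq_sym.
have := nearest_between xb1 b2a b21; have := nearest_between xb2 b1a b12.
have := perm_nat_neq x b12; have := perm_nat_neq x (ltn_ord_neq b1a).
have := perm_nat_neq x (ltn_ord_neq b2a); rewrite /strictly_between; move: e; lia.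
Qed.

Lemma nearest_above_exists x : (prank x a < a.+1)%N -> exists b, nearest x b && (x a < x b)%N.
Proof.
move=> xa.
have [j0 /andP[j0a aj0]] : exists j, (j < a)%N && (x a < x j)%N.
  apply/existsP; apply: contraLR xa; rewrite negb_exists => /forallP above.
  rewrite /prank ltnS -leqNgt -{1}(@card_ord_ltn n a (ltnW (ltn_ord a))).
  apply: subset_leq_card; apply/subsetP => j; rewrite !inE => ja; rewrite ja /=.
  by have := above j; rewrite ja /=; have := perm_nat_neq x (ltn_ord_neq ja); lia.
case: (@arg_minnP _ j0 (fun j => (j < a)%N && (x a < x j)%N) (fun j => nat_of_ord (x j)));
  first by rewrite j0a aj0.
move=> b /andP[ba ab] bmin; exists b; rewrite ab andbT /nearest ba.
apply/forallP => j; apply/implyP => /andP[ja jb]; rewrite /strictly_between.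
have [aj|] := boolP (x a < x j)%N; last lia.
by have := bmin j; rewrite ja aj /= => /(_ isT); lia.
Qed.

Lemma nearest_below_exists x : (1 < prank x a)%N -> exists b, nearest x b && (x b < x a)%N.
Proof.
rewrite /prank ltnS card_gt0 => /set0Pn [j0]; rewrite inE => /andP[j0a j0x].
case: (@arg_maxnP _ j0 (fun j => (j < a)%N && (x j < x a)%N) (fun j => nat_of_ord (x j)));
  first by rewrite j0a j0x.
move=> b /andP[ba bx] bmax; exists b; rewrite bx andbT /nearest ba.
apply/forallP => j; apply/implyP => /andP[ja jb]; rewrite /strictly_between.
have [ja'|] := boolP (x j < x a)%N; last lia.
by have := bmax j; rewrite ja ja' /= => /(_ isT); lia.
Qed.

Definition nearest_above x := odflt a [pick b | nearest x b && (x a < x b)%N].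
Definition nearest_below x := odflt a [pick b | nearest x b && (x b < x a)%N].

Lemma nearest_aboveP x : (prank x a < a.+1)%N ->
  nearest x (nearest_above x) && (x a < x (nearest_above x))%N.
Proof.
rewrite /nearest_above => /nearest_above_exists [b xb].
by case: pickP => [//|none]; rewrite none in xb.
Qed.

Lemma nearest_belowP x : (1 < prank x a)%N ->
  nearest x (nearest_below x) && (x (nearest_below x) < x a)%N.
Proof.
rewrite /nearest_below => /nearest_below_exists [b xb].
by case: pickP => [//|none]; rewrite none in xb.
Qed.

Lemma prank_swap_above x : (prank x a < a.+1)%N ->
  prank (swap_with (nearest_above x) x) a = (prank x a).+1.
Proof. by case/nearest_aboveP/andP; apply: prank_swap_nearest. Qed.

Lemma prank_swap_below x : (1 < prank x a)%N ->
  (prank (swap_with (nearest_below x) x) a).+1 = prank x a.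
Proof.
case/nearest_belowP/andP => xb bx.
have := prank_swap_nearest (nearest_swap xb).
by rewrite swap_with_at swap_with_partner swap_withK => ->.
Qed.

Lemma nearest_below_swap_above x : (prank x a < a.+1)%N ->
  nearest_below (swap_with (nearest_above x) x) = nearest_above x.
Proof.
move=> xa; have /andP[xb ab] := nearest_aboveP xa.
set b := nearest_above x in xb ab *; set x' := swap_with b x.
have x'a : (1 < prank x' a)%N by rewrite prank_swap_above.
have /andP[x'b' b'a] := nearest_belowP x'a.
apply: (nearest_uniq x'b' (nearest_swap xb)).
by move: b'a ab; rewrite /x' swap_with_at swap_with_partner; lia.
Qed.

Lemma nearest_above_swap_below x : (1 < prank x a)%N ->
  nearest_above (swap_with (nearest_below x) x) = nearest_below x.
Proof.
move=> xa; have /andP[xb ba] := nearest_belowP xa.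
set b := nearest_below x in xb ba *; set x' := swap_with b x.
have x'a : (prank x' a < a.+1)%N.
  by rewrite -ltnS prank_swap_below // ltnS prank_le.
have /andP[x'b' ab'] := nearest_aboveP x'a.
apply: (nearest_uniq x'b' (nearest_swap xb)).
by move: ab' ba; rewrite /x' swap_with_at swap_with_partner; lia.
Qed.

Section RankFlip.
Variable r : nat.
Hypotheses (r_gt0 : (0 < r)%N) (r_le : (r <= a)%N).

Definition rank_flip x :=
  if prank x a == r then swap_with (nearest_above x) x
  else if prank x a == r.+1 then swap_with (nearest_below x) x else x.

Lemma rank_flip_up x : prank x a = r -> rank_flip x = swap_with (nearest_above x) x.
Proof. by rewrite /rank_flip => ->; rewrite eqxx. Qed.

Lemma rank_flip_down x : prank x a = r.+1 -> rank_flip x = swap_with (nearest_below x) x.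
Proof. by rewrite /rank_flip => ->; rewrite eqxx gtn_eqF. Qed.

Lemma rank_flipK : involutive rank_flip.
Proof.
move=> x; have [xr|xr] := eqVneq (prank x a) r.
  have xa : (prank x a < a.+1)%N by rewrite xr ltnS.
  rewrite (rank_flip_up xr) rank_flip_down ?prank_swap_above ?xr //.
  by rewrite nearest_below_swap_above // swap_withK.
have [xr1|xr1] := eqVneq (prank x a) r.+1; last first.
  by rewrite /rank_flip (negbTE xr) (negbTE xr1) (negbTE xr) (negbTE xr1).
have xa : (1 < prank x a)%N by rewrite xr1 ltnS.
rewrite (rank_flip_down xr1) rank_flip_up; last first.
  by apply: succn_inj; rewrite prank_swap_below.
by rewrite nearest_above_swap_below // swap_withK.
Qed.

Lemma prank_rank_flip x : (prank (rank_flip x) a == r) = (prank x a == r.+1).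
Proof.
have [xr|xr] := eqVneq (prank x a) r.
  by rewrite (rank_flip_up xr) prank_swap_above xr ?ltnS // eqxx gtn_eqF.
have [xr1|xr1] := eqVneq (prank x a) r.+1.
  by rewrite (rank_flip_down xr1) -(inj_eq succn_inj) prank_swap_below xr1 ?eqxx ?ltnS.
by rewrite /rank_flip (negbTE xr) (negbTE xr1) (negbTE xr).
Qed.

Lemma prank_rank_flip_before x i : (i < a)%N -> prank (rank_flip x) i = prank x i.
Proof.
move=> ia; have [xr|xr] := eqVneq (prank x a) r.
  have xa : (prank x a < a.+1)%N by rewrite xr ltnS.
  by case/andP: (nearest_aboveP xa) => xb _; rewrite rank_flip_up // prank_swap_nearest_before.
have [xr1|xr1] := eqVneq (prank x a) r.+1; last by rewrite /rank_flip (negbTE xr) (negbTE xr1).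
have xa : (1 < prank x a)%N by rewrite xr1 ltnS.
by case/andP: (nearest_belowP xa) => xb _; rewrite rank_flip_down // prank_swap_nearest_before.
Qed.

End RankFlip.

End NearestSwap.

Local Open Scope ring_scope.

Lemma sum_nat_pred1 (V : zmodType) (lo hi k : nat) (v : V) : (lo <= k < hi)%N ->
  \sum_(lo <= i < hi) (if k == i then v else 0) = v.
Proof.
move=> k_in; rewrite (bigD1_seq k) ?mem_index_iota ?iota_uniq //= eqxx big1_seq ?addr0 //.
by move=> i /andP[ik _]; rewrite eq_sym (negbTE ik).
Qed.

Lemma sum_prank_succ (V : zmodType) n (a : 'I_n) r (F : 'S_n -> V) :
  (0 < r)%N -> (r <= a)%N -> depends_on_first_pranks a F ->
  \sum_(x : 'S_n) (if prank x a == r then F x else 0) =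
  \sum_(x : 'S_n) (if prank x a == r.+1 then F x else 0).
Proof.
move=> r_gt0 r_le Fdep; rewrite (reindex_inj (can_inj (rank_flipK r_gt0 r_le))).
apply: eq_bigr => x _; rewrite prank_rank_flip // (Fdep (rank_flip a r x) x) //.
by move=> i; apply: prank_rank_flip_before.
Qed.

Lemma sum_prank_eq (V : zmodType) n (a : 'I_n) (F : 'S_n -> V) r :
  depends_on_first_pranks a F -> (1 <= r <= a.+1)%N ->
  \sum_x F x = (\sum_x (if prank x a == r then F x else 0)) *+ a.+1.
Proof.
move=> Fdep /andP[r_gt0 r_le].
pose C k := \sum_x (if prank x a == k then F x else 0).
have C1 k : (1 <= k <= a.+1)%N -> C k = C 1%N.
  elim: k => // -[_|k IH] /andP[_ ka] //.
  have ka' : (k.+1 <= a.+1)%N := ltnW ka.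
  by rewrite -IH ?ka' //; symmetry; apply: sum_prank_succ.
have -> : \sum_x F x = \sum_x \sum_(1 <= k < a.+2) (if prank x a == k then F x else 0).
  by apply: eq_bigr => x _; rewrite sum_nat_pred1 // ltnS prank_le.
rewrite exchange_big /= (eq_big_nat _ _ (F2 := fun=> C 1%N)) => [|k]; last exact: C1.
by rewrite sumr_const_nat subn1 -(C1 r) ?r_gt0.
Qed.

Lemma size_pranks n (x : 'S_n) : size (pranks x) = n.
Proof. by rewrite size_map size_enum_ord. Qed.

Lemma nth_pranks n (x : 'S_n) k (kn : (k < n)%N) :
  nth 0%N (pranks x) k = prank x (Ordinal kn).
Proof.
rewrite /pranks (nth_map (Ordinal kn)) ?size_enum_ord //.
by rewrite -[k]/(nat_of_ord (Ordinal kn)) nth_ord_enum.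
Qed.

Lemma prank_first n (x : 'S_n) (n_gt0 : (0 < n)%N) : prank x (Ordinal n_gt0) = 1%N.
Proof.
by rewrite /prank (_ : [set j | _] = set0) ?cards0.
Qed.

Lemma take_pranks n k : depends_on_first_pranks k (fun x : 'S_n => take k (pranks x)).
Proof.
move=> x y xy; apply: (@eq_from_nth _ 0%N); first by rewrite !size_take !size_pranks.
move=> i; rewrite size_take size_pranks => ikn.
have [ik iin] : (i < k)%N /\ (i < n)%N by case: ifP ikn => kn ikn; lia.
by rewrite !nth_take // !(nth_pranks _ iin) xy.
Qed.

Lemma sum_tuple0 (V : zmodType) (F : 0.-tuple bool -> V) :
  \sum_(v : 0.-tuple bool) F v = F [tuple].
Proof. by rewrite (big_pred1 [tuple]) // => v; apply/esym/eqP; rewrite (tuple0 v). Qed.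

Lemma sum_tuple_rcons (V : zmodType) m (F : m.+1.-tuple bool -> V) :
  \sum_(v : m.+1.-tuple bool) F v =
  \sum_(u : m.-tuple bool) (F (rcons_tuple u true) + F (rcons_tuple u false)).
Proof.
rewrite (eq_bigr (fun u => \sum_(b : bool) F (rcons_tuple u b))); last first.
  by move=> u _; rewrite big_bool.
rewrite pair_big /= (reindex (fun ub : m.-tuple bool * bool => rcons_tuple ub.1 ub.2)) //=.
pose split_last (v : m.+1.-tuple bool) :=
  ([tuple of belast (head false v) (behead v)], last (head false v) (behead v)).
exists split_last => [[u b] _|v _].
  by congr pair; [apply: val_inj|]; case: u => -[|? ?] /= _; rewrite ?belast_rcons ?last_rcons.
by apply: val_inj => /=; rewrite -lastI; case: v => -[|? ?].
Qed.

Section ReachProbabilities.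
Variables (R : realFieldType) (n : nat) (p : R) (P : policy R).

Lemma path_weight_take t rs (acts : (t.-1).-tuple bool) k : (t.-1 <= k)%N ->
  path_weight p P (take k rs) acts = path_weight p P rs acts.
Proof.
move=> tk; apply: eq_bigr => i _ /=.
by rewrite take_takel // (leq_trans (ltn_ord i) tk).
Qed.

Lemma path_weight_rcons m rs (u : m.-tuple bool) b :
  path_weight (t := m.+2) p P rs (rcons_tuple u b) =
  path_weight (t := m.+1) p P rs u *
  (let q := P m.+1 (take m.+1 rs) u in if b then q * (1 - p) else 1 - q).
Proof.
rewrite /path_weight big_ord_recr /=; congr (_ * _).
  apply: eq_bigr => i _ /=.
  have im : (i <= size u)%N by rewrite size_tuple ltnW.
  by rewrite nth_rcons size_tuple ltn_ord -cats1 takel_cat.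
by rewrite nth_rcons size_tuple ltnn eqxx -cats1 take_size_cat ?size_tuple.
Qed.

(* Given the arrival order [x], the probability that no offer has been
   accepted before time [t]. *)
Definition reach_weight t (x : 'S_n) : R :=
  \sum_(acts : (t.-1).-tuple bool) path_weight p P (take t (pranks x)) acts.

Lemma reach_prob_total t s :
  reach_prob n p P t s true + reach_prob n p P t s false =
  (#|{perm 'I_n}|%:R)^-1 *
  \sum_(x : 'S_n) (if nth 0%N (pranks x) t.-1 == s then reach_weight t x else 0).
Proof.
rewrite /reach_prob -mulrDr -big_split; congr (_ * _); apply: eq_bigr => x _ /=.
rewrite -big_split /=; case: ifP => _; last by rewrite big1 // => acts _; rewrite addr0.
by apply: eq_bigr => acts _; rewrite -mulrDr addrC subrK mulr1.
Qed.

Lemma reach_weight_first_pranks t : depends_on_first_pranks t.-1 (reach_weight t).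
Proof.
move=> x y xy; apply: eq_bigr => acts _.
rewrite -[LHS](path_weight_take _ _ (leqnn _)) -[RHS](path_weight_take _ _ (leqnn _)).
by rewrite !take_takel ?leq_pred // (take_pranks xy).
Qed.

Lemma reach_prob_uniform m s : (m.+2 <= n)%N -> (1 <= s <= m.+2)%N ->
  reach_prob n p P m.+2 s true + reach_prob n p P m.+2 s false =
  (m.+2%:R)^-1 * ((#|{perm 'I_n}|%:R)^-1 * \sum_(x : 'S_n) reach_weight m.+2 x).
Proof.
move=> mn sm; rewrite reach_prob_total.
rewrite (sum_prank_eq (a := Ordinal mn) (@reach_weight_first_pranks m.+2) sm).
under eq_bigr do rewrite (nth_pranks _ mn).
set S := \sum_x _; by rewrite /= -[S *+ _]mulr_natr [S * _]mulrC mulrCA mulKf ?pnatr_eq0.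
Qed.

Lemma reach_weight_succ m (x : 'S_n) :
  reach_weight m.+2 x =
  \sum_(acts : m.-tuple bool)
    (let w := path_weight (t := m.+1) p P (take m.+1 (pranks x)) acts in
     let q := P m.+1 (take m.+1 (pranks x)) acts in
     w * (1 - q) + (1 - p) * (w * q)).
Proof.
rewrite /reach_weight sum_tuple_rcons; apply: eq_bigr => acts _.
rewrite !path_weight_rcons /= take_takel // !path_weight_take //; last exact: leqW.
ring.
Qed.

Lemma reach_prob_continue m s :
  reach_prob n p P m.+1 s false + (1 - p) * reach_prob n p P m.+1 s true =
  (#|{perm 'I_n}|%:R)^-1 *
  \sum_(x : 'S_n) (if nth 0%N (pranks x) m == s then reach_weight m.+2 x else 0).
Proof.
rewrite /reach_prob mulrCA -mulrDr mulr_sumr -big_split; congr (_ * _).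
apply: eq_bigr => x _ /=; case: ifP => _; last by rewrite !big1 ?mulr0 ?addr0.
by rewrite reach_weight_succ mulr_sumr -big_split.
Qed.

Lemma lp_rhs_reach_prob m : (m.+2 <= n)%N ->
  lp_rhs p (fun t s => reach_prob n p P t s true) (fun t s => reach_prob n p P t s false) m.+2 =
  (#|{perm 'I_n}|%:R)^-1 * \sum_(x : 'S_n) reach_weight m.+2 x.
Proof.
move=> mn; rewrite /lp_rhs /=; under eq_big_nat => s _ do rewrite reach_prob_continue.
rewrite -mulr_sumr exchange_big /=; congr (_ * _); apply: eq_bigr => x _.
by rewrite (nth_pranks _ (ltnW mn)) sum_nat_pred1 // ltnS prank_le.
Qed.

Lemma reach_prob_offer t s c :
  (forall (x : 'S_n) (acts : (t.-1).-tuple bool), nth 0%N (pranks x) t.-1 = s ->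
     P t (take t (pranks x)) acts = c) ->
  reach_prob n p P t s true = c * (reach_prob n p P t s true + reach_prob n p P t s false).
Proof.
move=> Pc; rewrite reach_prob_total {1}/reach_prob mulrCA; congr (_ * _).
rewrite mulr_sumr; apply: eq_bigr => x _; case: eqP => [xs|_]; last by rewrite big1 ?mulr0.
by rewrite mulr_sumr; apply: eq_bigr => acts _ /=; rewrite Pc // mulrC.
Qed.

Hypotheses (P_valid : valid_policy P) (p_le1 : p <= 1).

Lemma path_weight_ge0 t rs (acts : (t.-1).-tuple bool) : 0 <= path_weight p P rs acts.
Proof.
apply: prodr_ge0 => k _ /=; have /andP[q_ge0 q_le1] := P_valid k.+1 (take k.+1 rs) (take k acts).
by case: ifP => _; rewrite ?mulr_ge0 // subr_ge0.
Qed.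

Lemma reach_prob_ge0 t s b : 0 <= reach_prob n p P t s b.
Proof.
rewrite /reach_prob mulr_ge0 ?invr_ge0 ?ler0n //.
apply: sumr_ge0 => x _; apply: sumr_ge0 => acts _; case: ifP => _ //.
have /andP[q_ge0 q_le1] := P_valid t (take t (pranks x)) acts.
by rewrite mulr_ge0 ?path_weight_ge0 //; case: b; rewrite /= ?subr_ge0.
Qed.

Lemma reach_prob_inPol : (1 <= n)%N ->
  inPol n p (fun t s => reach_prob n p P t s true) (fun t s => reach_prob n p P t s false).
Proof.
move=> n_gt0; split.
- by move=> t s _ _; rewrite !reach_prob_ge0.
- rewrite reach_prob_total /=.
  under eq_bigr do
    rewrite (nth_pranks _ n_gt0) prank_first eqxx /reach_weight sum_tuple0 /path_weight big_ord0.
  by rewrite sumr_const mulVf // pnatr_eq0 card_Sn -lt0n fact_gt0.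
- move=> t s /andP[t_ge2 tn] st; case: t t_ge2 tn st => [|[|m]] // _ tn st.
  by rewrite reach_prob_uniform // lp_rhs_reach_prob.
Qed.

End ReachProbabilities.

Section InducedPolicy.
Variables (R : realFieldType) (n : nat) (p : R) (x y : nat -> nat -> R) (P : policy R).
Hypotheses (n_gt0 : (1 <= n)%N) (p_le1 : p <= 1) (xy_inPol : inPol n p x y).
Hypotheses (P_valid : valid_policy P) (P_induced : induced_policy n p x y P).

Lemma induced_policy_pranks t s (sg : 'S_n) (acts : (t.-1).-tuple bool) :
  (1 <= t <= n)%N -> nth 0%N (pranks sg) t.-1 = s ->
  (t = 1%N -> P t (take t (pranks sg)) acts = x 1%N 1%N) /\
  ((1 < t)%N -> lp_rhs p x y t != 0 ->
     P t (take t (pranks sg)) acts = t%:R * x t s / lp_rhs p x y t).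
Proof.
move=> tn sg_s; have size_t : size (take t (pranks sg)) = t.
  by rewrite size_takel // size_pranks; case/andP: tn.
have [P1 Pt] := @P_induced t _ acts tn size_t (size_tuple acts).
split=> // t_gt1 D_neq0.
by rewrite Pt // -nth_last size_t nth_take ?prednK ?sg_s // ltnW.
Qed.

Lemma induced_reach_first :
  x 1%N 1%N = reach_prob n p P 1 1 true /\ y 1%N 1%N = reach_prob n p P 1 1 false.
Proof.
have [_ X11 _] := reach_prob_inPol P_valid p_le1 n_gt0.
have [_ xy11 _] := xy_inPol.
have X_eq : reach_prob n p P 1 1 true = x 1%N 1%N.
  rewrite (reach_prob_offer (c := x 1%N 1%N) _) ?X11 ?mulr1 // => sg acts sg1.
  by case: (induced_policy_pranks acts _ sg1) => [|-> //]; rewrite n_gt0.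
split=> //; apply: (addrI (x 1%N 1%N)); by rewrite xy11 -{1}X_eq X11.
Qed.

Lemma induced_reach_succ m : (m.+2 <= n)%N ->
  (forall s, (1 <= s <= m.+1)%N ->
     x m.+1 s = reach_prob n p P m.+1 s true /\ y m.+1 s = reach_prob n p P m.+1 s false) ->
  forall s, (1 <= s <= m.+2)%N ->
    x m.+2 s = reach_prob n p P m.+2 s true /\ y m.+2 s = reach_prob n p P m.+2 s false.
Proof.
move=> mn IH s sm.
have [X_ge0 _ X_rec] := reach_prob_inPol P_valid p_le1 n_gt0.
have [xy_ge0 _ xy_rec] := xy_inPol.
have tn : (2 <= m.+2 <= n)%N by [].
have tn1 : (1 <= m.+2 <= n)%N by [].
have same_rhs : lp_rhs p (fun t s => reach_prob n p P t s true)
                  (fun t s => reach_prob n p P t s false) m.+2 = lp_rhs p x y m.+2.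
  by apply: eq_big_nat => sg /IH [-> ->].
have xy_ms := xy_rec _ _ tn sm.
have tot : reach_prob n p P m.+2 s true + reach_prob n p P m.+2 s false = x m.+2 s + y m.+2 s.
  by rewrite X_rec // same_rhs xy_ms.
have [x_ge0 y_ge0] := xy_ge0 _ _ tn1 sm.
have [X_ge0' Y_ge0'] := X_ge0 _ _ tn1 sm.
set D := lp_rhs p x y m.+2 in xy_ms.
have [D0|D_neq0] := eqVneq D 0.
  move: (xy_ms); rewrite D0 mulr0 => /eqP; rewrite paddr_eq0 // => /andP[/eqP x0 /eqP y0].
  move: tot; rewrite xy_ms D0 mulr0 => /eqP; rewrite paddr_eq0 // => /andP[/eqP X0 /eqP Y0].
  by rewrite x0 y0 X0 Y0.
have X_eq : reach_prob n p P m.+2 s true = x m.+2 s.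
  rewrite (reach_prob_offer (c := m.+2%:R * x m.+2 s / D) _); last first.
    by move=> sg acts sgs; case: (induced_policy_pranks acts tn1 sgs) => _ ->.
  rewrite tot xy_ms; field; rewrite D_neq0 andbT; apply: lt0r_neq0.
  by have := ler0n R m; lra.
split=> //; apply: (addrI (x m.+2 s)); by rewrite -tot X_eq.
Qed.

Lemma induced_reach_prob t s : (1 <= t <= n)%N -> (1 <= s <= t)%N ->
  x t s = reach_prob n p P t s true /\ y t s = reach_prob n p P t s false.
Proof.
elim: t s => [//|[|m] IH] s /andP[_ tn] st.
  have -> : s = 1%N by lia.
  exact: induced_reach_first.
by apply: induced_reach_succ => // sg sgm; apply: IH; rewrite //= ltnW.
Qed.

End InducedPolicy.

Theorem theorem1 (R : realFieldType) (n : nat) (p : R) :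
  (1 <= n)%N -> 0 < p <= 1 ->
  (forall P : policy R, valid_policy P ->
     inPol n p (fun t s => reach_prob n p P t s true)
               (fun t s => reach_prob n p P t s false)) /\
  (forall x y : nat -> nat -> R, inPol n p x y ->
     forall P : policy R, valid_policy P -> induced_policy n p x y P ->
     forall t s, (1 <= t <= n)%N -> (1 <= s <= t)%N ->
       x t s = reach_prob n p P t s true /\ y t s = reach_prob n p P t s false).
Proof.
move=> n_gt0 /andP[_ p_le1]; split=> [P P_valid | x y xy P P_valid P_induced].
  exact: reach_prob_inPol.
exact: induced_reach_prob.
Qed.
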